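(* For every $\varepsilon>0$ and every deterministic strategy $A$ for the Canadian Traveller Problem, there exist a unit-weighted outerplanar graph $G$, vertices $s,t$ of $G$, and a set of edges $E_*$ such that $(G,E_* )$ is a road map and the competitive ratio of $A$ on $(G,E_* )$ is greater than $9-\varepsilon$. In other words, no deterministic strategy achieves competitive ratio $9-\varepsilon$ on all road maps $(G,E_* )$ with $G$ a unit-weighted outerplanar graph (with no restriction on the number $k$ of blocked edges).
   Context: The $k$-Canadian Traveller Problem ($k$-CTP): we are given an undirected connected graph $G=(V,E,\omega)$ with weights $\omega:E\to\mathbb{Q}^+$, a source $s\in V$ and a target $t\in V$, and a hidden set $E_*\subsetneq E$ of blocked edges with $|E_*|\le k$. The pair $(G,E_* )$ is a road map if $s$ and $t$ are connected in $G\setminus E_*$; only road maps are considered. A traveller starts at $s$ and must reach $t$. Initially $E_*$ is unknown; the traveller learns whether an edge is blocked exactly when he visits one of its endpoints. A (deterministic) strategy is an online algorithm which, given $G$, $\omega$, $s$, $t$, $k$, the sequence of vertices visited so far and the set of blocked edges revealed so far, chooses the next vertex, a neighbour of the current vertex through an edge not known to be blocked. The cost of the resulting $(s,t)$-walk is the sum of the weights of the traversed edges (with multiplicity). The competitive ratio of $A$ on $(G,E_* )$ is this cost divided by $d_{E_*}(s,t)$, the length of a shortest $(s,t)$-path in $G\setminus E_*$. A graph is unit-weighted if every edge has weight $1$, and outerplanar if it admits a planar embedding with all vertices on the outer face. *)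

From HB Require Import structures.
From mathcomp Require Import all_boot all_order all_algebra all_fingroup.
From mathcomp Require Import reals.
Set Implicit Arguments. Unset Strict Implicit. Unset Printing Implicit Defensive.
Import Order.TTheory GRing.Theory Num.Theory.

(* A unit-weighted simple undirected graph on the vertex set 'I_n is given by
   its edge set E : {set {set 'I_n}}, every edge being a 2-element set. *)
Definition simple_graph (n : nat) (E : {set {set 'I_n}}) : Prop :=
  forall e, e \in E -> #|e| = 2.

Definition adj (n : nat) (E : {set {set 'I_n}}) (u v : 'I_n) : bool :=
  [set u; v] \in E.

Definition walk_len (n : nat) (E : {set {set 'I_n}}) (u v : 'I_n) (l : nat) : Prop :=
  exists p : seq 'I_n, [/\ size p = l, path (adj E) u p & last u p = v].

Definition connected_graph (n : nat) (E : {set {set 'I_n}}) : Prop :=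
  forall u v : 'I_n, exists l, walk_len E u v l.

Definition sp_dist (n : nat) (E Es : {set {set 'I_n}}) (s t : 'I_n) (d : nat) : Prop :=
  walk_len (E :\: Es) s t d /\ (forall d', walk_len (E :\: Es) s t d' -> d <= d').

(* Outerplanarity: the vertices can be placed on a circle (in the cyclic order
   given by the permutation sigma) so that edges, drawn as chords, do not cross. *)
Definition outerplanar (n : nat) (E : {set {set 'I_n}}) : Prop :=
  exists sigma : {perm 'I_n},
    forall a b c d : 'I_n,
      [set a; b] \in E -> [set c; d] \in E ->
      ~ [/\ (sigma a < sigma c)%N, (sigma c < sigma b)%N & (sigma b < sigma d)%N].

Definition road_map (n : nat) (E Es : {set {set 'I_n}}) (s t : 'I_n) : Prop :=
  Es \proper E /\ exists l, walk_len (E :\: Es) s t l.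

(* A deterministic strategy: given the graph (vertex count n and edge set E;
   weights are all 1), s, t, k, the sequence of vertices visited so far (starting
   with s; its last element is the current vertex) and the set of blocked edges
   revealed so far, it returns the next vertex. *)
Definition strategy : Type :=
  forall n : nat, {set {set 'I_n}} -> 'I_n -> 'I_n -> nat ->
    seq 'I_n -> {set {set 'I_n}} -> 'I_n.

Definition valid_strategy (A : strategy) : Prop :=
  forall n (E : {set {set 'I_n}}) s t k (h : seq 'I_n) (rev : {set {set 'I_n}}),
    (exists w, [set last s h; w] \in E /\ [set last s h; w] \notin rev) ->
    [set last s h; A n E s t k h rev] \in E /\
    [set last s h; A n E s t k h rev] \notin rev.

Definition revealed (n : nat) (Es : {set {set 'I_n}}) (h : seq 'I_n) : {set {set 'I_n}} :=
  [set e in Es | has (fun v => v \in e) h].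

Fixpoint history (A : strategy) (n : nat) (E Es : {set {set 'I_n}}) (s t : 'I_n)
    (k : nat) (i : nat) : seq 'I_n :=
  match i with
  | 0 => [:: s]
  | i'.+1 => let h := history A E Es s t k i' in
             rcons h (A n E s t k h (revealed Es h))
  end.

Definition position (A : strategy) (n : nat) (E Es : {set {set 'I_n}}) (s t : 'I_n)
    (k i : nat) : 'I_n :=
  last s (history A E Es s t k i).

(* The competitive ratio of A on (G,E_* ) is > r: the walk has cost m when it
   first reaches t (infinite if it never does), and m / d > r. *)
Definition ratio_gt (R : realType) (A : strategy) (n : nat) (E Es : {set {set 'I_n}})
    (s t : 'I_n) (k : nat) (r : R) : Prop :=
  forall d, sp_dist E Es s t d ->
  forall m, position A E Es s t k m = t -> (r * d%:R < m%:R)%R.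

From HB Require Import structures.
From mathcomp Require Import all_boot all_order all_algebra all_fingroup.
From mathcomp Require Import reals.
From mathcomp Require Import zify ring lra.
From Stdlib Require Import Classical.
Set Implicit Arguments. Unset Strict Implicit. Unset Printing Implicit Defensive.
Import Order.TTheory GRing.Theory Num.Theory.

(* The adversary uses a fan: a path 0, ..., N-1 together with a hub t = N
   adjacent to every path vertex, and s in the middle of the path.  Blocking
   every spoke but one, unknown to the traveller, turns the problem into
   searching a line for a point at unknown distance n, then paying n + 1.
   Running the strategy against the instance where all spokes are blocked
   yields a walk on the path; the open spoke is placed at a point, at distance
   n from s, that the walk does not reach within c (n + 1) - 1 steps.  Such a
   point exists for c < 9 (linear search): if the walk turns at distances
   e_0, e_1, ... on alternating sides with partial sums S_k, reaching beyond
   e_k costs at least 2 S_(k+1) + e_k, so S_(k+1) <= a (S_k - S_(k-1)) up to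
   lower order terms, with a = (c - 1)/2 < 4.  Writing a < 4 p^2 with p < 1,
   the ratios S_(k+1) / S_k then decrease by at least 4 p (1 - p) at every
   turn, which is impossible for an increasing sequence. *)

Definition unit_steps (w : nat -> int) := forall i, (`|w i.+1 - w i| <= 1)%R.

Definition ray (b : bool) (n : nat) : int := (if b then n%:Z else - n%:Z)%R.

Lemma ray_inj b b' n n' : 0 < n -> ray b n = ray b' n' -> b = b' /\ n = n'.
Proof. by case: b; case: b' => /=; lia. Qed.

Section UnitStepWalks.

Variable w : nat -> int.
Hypothesis w_steps : unit_steps w.

Lemma unit_steps_lipschitz i j : i <= j -> (`|w j - w i| <= (j - i)%N%:Z)%R.
Proof.
move=> /subnK <-; elim: (j - i) => [|d IH]; first by rewrite add0n subrr.
by have := w_steps (d + i); rewrite addSn; lia.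
Qed.

Hypothesis w0 : w 0 = 0%R.

Lemma unit_steps_ivt j (v : int) : (0 <= v <= w j)%R -> exists2 i, i <= j & w i = v.
Proof.
elim: j => [|j IH] /andP [v0 vj]; first by exists 0 => //; lia.
have [vj'|vj'] := lerP v (w j).
  by have [i ij wi] := IH (ltac:(lia)); exists i => //; lia.
by exists j.+1 => //; have := w_steps j; lia.
Qed.

End UnitStepWalks.

Lemma unit_steps_opp w : unit_steps w -> unit_steps (fun i => - w i)%R.
Proof. by move=> w_steps i; have := w_steps i; lia. Qed.

Lemma unit_steps_ray_ivt w b j n m : unit_steps w -> w 0 = 0%R -> n <= m ->
  w j = ray b m -> exists2 i, i <= j & w i = ray b n.
Proof.
move=> w_steps w0 nm; case: b => /= wj; first by apply: (unit_steps_ivt w_steps w0); lia.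
have w0' : (- w 0 = 0)%R by rewrite w0 oppr0.
have [|i ij wi] := unit_steps_ivt (unit_steps_opp w_steps) w0' (j := j) (v := Posz n); first lia.
by exists i => //; lia.
Qed.

(* With [Q = y / x] this is [4 p^2 (1 - 1/Q) <= Q - 4 p (1 - p)], i.e.
   [0 <= (Q - 2 p)^2]. *)
Lemma ratio_step (R : realFieldType) (p Q x y z : R) : (0 < y -> 0 <= x ->
  y <= Q * x -> z <= 4 * p ^+ 2 * (y - x) -> z <= (Q - 4 * p * (1 - p)) * y)%R.
Proof.
move=> y0 x0 yQx zy.
have Q0 : (0 < Q)%R by rewrite ltNge; apply/negP => Q0; have := mulr_le0_ge0 Q0 x0; lra.
rewrite -(ler_pM2l Q0).
have h1 : (Q * z <= Q * (4 * p ^+ 2 * (y - x)))%R by rewrite ler_pM2l.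
have p0 : (0 <= 4 * p ^+ 2)%R by rewrite mulr_ge0 ?sqr_ge0 ?ler0n.
have h2 : (4 * p ^+ 2 * y <= 4 * p ^+ 2 * (Q * x))%R by rewrite ler_wpM2l.
have sq : (0 <= (Q - 2 * p) ^+ 2 * y)%R by rewrite mulr_ge0 ?sqr_ge0 ?ltW.
nra.
Qed.

Definition visits_within (R : realType) (c : R) (w : nat -> int) (L : nat) :=
  forall b n, 0 < n <= L -> exists j, w j = ray b n /\ (j.+1%:R <= c * n.+1%:R)%R.

Section FirstVisits.

Variables (R : realType) (c : R) (L : nat) (w : nat -> int).
Hypotheses (w_steps : unit_steps w) (w0 : w 0 = 0%R) (w_visits : visits_within c w L).

Lemma visit_exists b n : exists j, (w j == ray b n) || ~~ (0 < n <= L).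
Proof.
have [nL|] := boolP (0 < n <= L); last by exists 0; rewrite orbT.
by have [j [wj _]] := w_visits b nL; exists j; rewrite wj eqxx.
Qed.

(* Meaningful only for [0 < n <= L]; it is [0] otherwise. *)
Definition first_visit b n := ex_minn (visit_exists b n).

Lemma first_visitE b n : 0 < n <= L -> w (first_visit b n) = ray b n.
Proof. by move=> nL; rewrite /first_visit; case: ex_minnP => j; rewrite nL orbF => /eqP. Qed.

Lemma first_visit_min b n j : w j = ray b n -> first_visit b n <= j.
Proof. by rewrite /first_visit; case: ex_minnP => i _ imin wj; apply: imin; rewrite wj eqxx. Qed.

Lemma first_visit_fast b n : 0 < n <= L -> ((first_visit b n).+1%:R <= c * n.+1%:R)%R.
Proof.
move=> nL; have [j [wj jc]] := w_visits b nL.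
by apply: le_trans jc; rewrite ler_nat ltnS (first_visit_min wj).
Qed.

Lemma first_visit_ge b n : 0 < n <= L -> n <= first_visit b n.
Proof.
move=> nL; have := unit_steps_lipschitz w_steps (leq0n (first_visit b n)).
by rewrite first_visitE // w0 subr0 subn0; case: (b) => /=; lia.
Qed.

Lemma first_visit_neq b n m : 0 < n <= L -> 0 < m <= L ->
  first_visit b n != first_visit (~~ b) m.
Proof.
move=> nL mL; apply/eqP => e.
have := first_visitE b nL; rewrite e first_visitE // => /ray_inj.
by case/andP: mL => m0 _ /(_ m0) [/eqP]; rewrite eq_sym; case: (b).
Qed.

Lemma first_visit_mono b n m : 0 < n -> n <= m <= L ->
  first_visit b n + (m - n) <= first_visit b m.
Proof.
move=> n0 /andP [nm mL].
have nL : 0 < n <= L by rewrite n0 (leq_trans nm mL).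
have mL' : 0 < m <= L by rewrite (leq_trans n0 nm) mL.
have [i im wi] := unit_steps_ray_ivt w_steps w0 nm (first_visitE b mL').
have le_nm := leq_trans (first_visit_min wi) im.
have := unit_steps_lipschitz w_steps le_nm.
by rewrite !first_visitE //; case: b le_nm {im wi} => /=; lia.
Qed.

Lemma first_visit_cross b n m : 0 < n <= L -> 0 < m <= L ->
  first_visit b n < first_visit (~~ b) m -> first_visit b n + n + m <= first_visit (~~ b) m.
Proof.
move=> nL mL lt_nm; have := unit_steps_lipschitz w_steps (ltnW lt_nm).
by rewrite !first_visitE //; case: b lt_nm => /=; lia.
Qed.

Lemma turning_extent b m n0 : 0 < m <= L -> 0 < n0 <= L ->
  first_visit b n0 < first_visit (~~ b) m ->
  exists2 e, n0 <= e <= L & first_visit b e < first_visit (~~ b) m /\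
    forall n, e < n <= L -> first_visit (~~ b) m < first_visit b n.
Proof.
move=> mL n0L lt0.
pose P n := (first_visit b n < first_visit (~~ b) m) && (n <= L).
have exP : exists n, P n by exists n0; rewrite /P lt0; case/andP: n0L.
have ubP n : P n -> n <= L by case/andP.
case: (ex_maxnP exP ubP) => e /andP [lt_e eL] emax.
have n0e : n0 <= e by apply: emax; rewrite /P lt0; case/andP: n0L.
exists e; first by rewrite n0e eL.
split=> // n /andP [en nL].
have nL' : 0 < n <= L by rewrite nL andbT; case/andP: n0L => n00 _; lia.
rewrite ltn_neqAle eq_sym (first_visit_neq b nL' mL) /= leqNgt.
by apply/negP => lt_n; have := emax n; rewrite /P lt_n nL => /(_ isT); lia.
Qed.

(* The walk first reaches distance [ep.+1] on side [~~ b] after turning at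
   distance [e] on side [b]; [S] bounds the sum of all turning distances so
   far, each of which has been walked twice. *)
Record turn (b : bool) (ep e S : nat) : Prop := Turn {
  turn_extent : 0 < e <= L;
  turn_prev_lt : ep < L;
  turn_reached : first_visit b e < first_visit (~~ b) ep.+1;
  turn_not_beyond : forall n, e < n <= L -> first_visit (~~ b) ep.+1 < first_visit b n;
  turn_sum : e + ep <= S;
  turn_time : 2 * S + ep < first_visit (~~ b) ep.+1 }.

Lemma turn_first : 0 < L -> exists b e, turn b 0 e e.
Proof.
move=> L0; have oneL : 0 < 1 <= L by rewrite L0.
have [b lt_b] : exists b, first_visit b 1 < first_visit (~~ b) 1.
  have := first_visit_neq true oneL oneL; rewrite neq_ltn => /orP [lt1|lt1].
  - by exists true.
  - by exists false.
have [e /andP [e1 eL] [lt_e beyond]] := turning_extent oneL oneL lt_b.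
have eL' : 0 < e <= L by rewrite eL andbT.
have := first_visit_cross eL' oneL lt_e; have := first_visit_ge b eL'.
by exists b, e; split => //; lia.
Qed.

Lemma turn_next b ep e S : turn b ep e S -> e < L ->
  exists2 e', ep < e' & turn (~~ b) e e' (S + e').
Proof.
case=> eL epL _ beyond eS time lt_eL.
have epL' : 0 < ep.+1 <= L by [].
have e1L : 0 < e.+1 <= L by [].
have lt_ep : first_visit (~~ b) ep.+1 < first_visit (~~ ~~ b) e.+1.
  by rewrite negbK; apply: beyond; rewrite leqnn.
have [e' /andP [epe' e'L] [lt_e' beyond']] := turning_extent e1L epL' lt_ep.
have e'L' : 0 < e' <= L by rewrite e'L andbT; apply: leq_trans epe'.
have cross := first_visit_cross e'L' e1L lt_e'.
rewrite negbK in lt_e' beyond' cross.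
have mono := first_visit_mono (~~ b) (ltn0Sn ep) (ltac:(lia) : ep.+1 <= e' <= L).
by exists e' => //; split; rewrite ?negbK //; lia.
Qed.

Lemma turn_sum_bound b ep e S : turn b ep e S -> (S%:R <= (c - 1) / 2 * ep.+2%:R)%R.
Proof.
case=> _ epL _ _ _ time.
have fast := first_visit_fast (~~ b) (ltac:(lia) : 0 < ep.+1 <= L).
have : ((2 * S + ep.+2)%:R <= c * ep.+2%:R)%R.
  by apply: le_trans fast; rewrite ler_nat !addnS !ltnS.
by rewrite natrD natrM; lra.
Qed.

Hypothesis c_lt9 : (c < 9)%R.

Lemma turn_extent_bound b ep e S : turn b ep e S -> e.+2 <= 6 * ep.+2.
Proof.
move=> t; have := turn_sum_bound t.
have : ((c - 1) / 2 * ep.+2%:R < 4 * ep.+2%:R)%R.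
  by rewrite ltr_pM2r ?ltr0Sn //; move: c_lt9; lra.
move=> /[swap] /le_lt_trans /[apply]; rewrite -natrM ltr_nat.
by have := turn_sum t; lia.
Qed.

(* After [k] turns: the turning distances grow at least linearly in [k] and at
   most exponentially, so [L] is not exceeded. *)
Definition stage k b ep e S :=
  [/\ turn b ep e S, k <= 2 * e, k <= 2 * ep + 1 & ep.+2 <= 2 * 6 ^ k].

Lemma stage_next k b ep e S : stage k b ep e S -> 2 * 6 ^ k.+1 <= L ->
  exists e', stage k.+1 (~~ b) e e' (S + e').
Proof.
case=> t ke kep epk kL.
have eL : e.+2 <= 2 * 6 ^ k.+1 by have := turn_extent_bound t; rewrite expnS; lia.
have [e' epe' t'] := turn_next t (ltac:(lia) : e < L).
by exists e'; split => //; lia.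
Qed.

Lemma stage_exists k : 2 * 6 ^ k <= L -> exists b ep e S, stage k b ep e S.
Proof.
elim: k => [|k IH] kL.
  have [b [e t]] := turn_first (ltac:(lia) : 0 < L).
  by exists b, 0, e, e; split.
have [b [ep [e [S st]]]] : exists b ep e S, stage k b ep e S.
  by apply: IH; move: kL; rewrite expnS; lia.
by have [e' st'] := stage_next st kL; exists (~~ b), e, e', (S + e').
Qed.

Variables (p : R) (E0 : nat).
Hypothesis E0_large : forall n, E0 <= n -> ((c - 1) / 2 * n.+2%:R <= 4 * p ^+ 2 * n%:R)%R.

Definition ratio_bound j : R := (4 * p ^+ 2 - j%:R * (4 * p * (1 - p)))%R.

Lemma turn_sum_extent b ep e S : turn b ep e S -> E0 <= ep ->
  (S%:R <= 4 * p ^+ 2 * ep%:R)%R.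
Proof. by move=> t /E0_large; apply: le_trans (turn_sum_bound t). Qed.

Lemma stage_ratio j : 2 * 6 ^ (2 * E0 + j).+1 <= L ->
  exists b ep e S, stage (2 * E0 + j).+1 b ep e S /\ (S%:R <= ratio_bound j * (S - e)%:R)%R.
Proof.
elim: j => [|j IH] jL.
  rewrite addn0 in jL *.
  have [b [ep [e [S st]]]] : exists b ep e S, stage (2 * E0) b ep e S.
    by apply: stage_exists; move: jL; rewrite expnS; lia.
  have [e' st'] := stage_next st jL.
  exists (~~ b), e, e', (S + e'); split => //; rewrite addnK /ratio_bound mul0r subr0.
  case: st => [t eE _ _]; case: st' => [t' _ _ _].
  apply: le_trans (turn_sum_extent t' (ltac:(lia))) _.
  apply: ler_wpM2l; first by rewrite mulr_ge0 ?sqr_ge0 ?ler0n.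
  by rewrite ler_nat; have := turn_sum t; lia.
have [b [ep [e [S [st ratio]]]]] := IH (ltac:(move: jL; rewrite addnS expnS; lia)).
have [e' st'] := stage_next st (ltac:(by rewrite -addnS)).
exists (~~ b), e, e', (S + e'); split; first by rewrite addnS.
rewrite addnK; case: st => [t eE _ _]; case: st' => [t' _ _ _].
have eS : e <= S by have := turn_sum t; lia.
have S0 : (0 < S%:R :> R)%R by rewrite ltr0n; have := turn_extent t; lia.
have -> : ratio_bound j.+1 = (ratio_bound j - 4 * p * (1 - p))%R.
  by rewrite /ratio_bound -natr1; ring.
apply: ratio_step S0 (ler0n _ _) ratio _.
by rewrite -natrB ?leq_subr // subKn //; apply: turn_sum_extent t' _; lia.
Qed.

Lemma visits_within_contradiction J :
  (ratio_bound J <= 1)%R -> 2 * 6 ^ (2 * E0 + J).+1 <= L -> False.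
Proof.
move=> ratioJ /stage_ratio [b [ep [e [S [[t _ _ _] ratio]]]]].
have : (S%:R <= (S - e)%:R :> R)%R.
  by apply: le_trans ratio _; rewrite -[leRHS]mul1r ler_wpM2r.
by rewrite ler_nat; have := turn_sum t; have := turn_extent t; lia.
Qed.

End FirstVisits.

Section LinearSearch.
Local Open Scope ring_scope.

Lemma exists_nat_ge (R : archiRealDomainType) (x : R) : exists n : nat, x <= n%:R.
Proof.
exists (Num.bound `|x|); apply: ltW; apply: le_lt_trans (ler_norm x) _.
exact/archi_boundP/normr_ge0.
Qed.

Lemma unit_walk_misses (R : realType) (r : R) : r < 9 ->
  exists L, forall w, unit_steps w -> w 0%N = 0 ->
    exists b n, (0 < n <= L)%N /\
      forall d j, (d <= n.+1)%N -> w j = ray b n -> r * d%:R < j.+1%:R.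
Proof.
move=> r9; set c := Num.max r 1.
have c1 : 1 <= c by rewrite /c le_max lexx orbT.
have c9 : c < 9 by rewrite /c gt_max r9 ltr1n.
set a := (c - 1) / 2; set p := (a + 4) / 8.
have a_lt : a < 4 * p ^+ 2.
  rewrite -subr_gt0 (_ : 4 * p ^+ 2 - a = (4 - a) ^+ 2 / 16); last by rewrite /p; field.
  by rewrite divr_gt0 // exprn_gt0 // subr_gt0 /a; lra.
have [E0 hE0] := exists_nat_ge (2 * a / (4 * p ^+ 2 - a)).
have E0_large n : (E0 <= n)%N -> a * n.+2%:R <= 4 * p ^+ 2 * n%:R.
  move=> En; have : 2 * a <= n%:R * (4 * p ^+ 2 - a).
    by rewrite -ler_pdivrMr ?subr_gt0 //; apply: le_trans hE0 _; rewrite ler_nat.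
  by rewrite -addn2 natrD; lra.
have d0 : 0 < 4 * p * (1 - p) by rewrite !mulr_gt0 // ?subr_gt0 /p /a; lra.
have [J hJ] := exists_nat_ge ((4 * p ^+ 2 - 1) / (4 * p * (1 - p))).
have ratioJ : ratio_bound p J <= 1 by move: hJ; rewrite /ratio_bound ler_pdivrMr //; lra.
exists (2 * 6 ^ (2 * E0 + J).+1)%N => w w_steps w0.
apply: NNPP => misses.
apply: (visits_within_contradiction w_steps w0 _ c9 E0_large ratioJ (leqnn _)).
move=> b n nL; apply: NNPP => late; apply: misses; exists b, n; split => // d j dn wj.
have jc : c * n.+1%:R < j.+1%:R by rewrite ltNge; apply/negP => jc; apply: late; exists j.
apply: le_lt_trans jc; apply: le_trans (_ : c * d%:R <= _).
  by rewrite ler_wpM2r // /c le_max lexx.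
by apply: ler_wpM2l; [lra | rewrite ler_nat].
Qed.

End LinearSearch.

Section Runs.

Local Unset Implicit Arguments.
Variables (A : strategy) (n : nat) (E : {set {set 'I_n}}) (s t : 'I_n) (k : nat).
Local Set Implicit Arguments.

Local Notation run Es := (history A E Es s t k).
Local Notation pos Es := (position A E Es s t k).

Lemma position_succ Es i : pos Es i.+1 = A n E s t k (run Es i) (revealed Es (run Es i)).
Proof. by rewrite /position /= last_rcons. Qed.

Lemma position_in_history Es i : pos Es i \in run Es i.
Proof.
case: i => [|i]; first by rewrite mem_seq1.
by rewrite position_succ /= mem_rcons mem_head.
Qed.

Lemma mem_history Es i x : x \in run Es i -> exists2 j, j <= i & pos Es j = x.
Proof.
elim: i => [|i IH]; first by rewrite mem_seq1 => /eqP ->; exists 0.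
rewrite /= mem_rcons in_cons => /orP [/eqP ->|/IH [j ji <-]].
  by exists i.+1; rewrite ?position_succ.
by exists j => //; apply: leqW.
Qed.

Lemma history_subset Es j i : j <= i -> {subset run Es j <= run Es i}.
Proof.
elim: i => [|i IH]; first by rewrite leqn0 => /eqP ->.
rewrite leq_eqVlt => /orP [/eqP -> //|/IH sub v /sub].
by rewrite /= mem_rcons in_cons orbC => ->.
Qed.

Lemma history_agree Es Es' i :
  (forall j, j < i -> revealed Es' (run Es j) = revealed Es (run Es j)) -> run Es' i = run Es i.
Proof. by elim: i => [//|i IH] same /=; rewrite IH ?same // => j /ltnW; apply: same. Qed.

End Runs.

Lemma revealed_sub n (Es : {set {set 'I_n}}) h : revealed Es h \subset Es.
Proof. by apply/subsetP => e; rewrite inE => /andP []. Qed.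

Lemma revealed_setD1 n (Es : {set {set 'I_n}}) (e : {set 'I_n}) (h : seq 'I_n) :
  {in h, forall v, v \notin e} -> revealed (Es :\ e) h = revealed Es h.
Proof.
move=> he; apply/setP => f; rewrite !inE; case: eqP => // -> /=.
by apply/esym/negbTE; rewrite andbC; apply/negP => /andP [/hasP [v /he /negbTE ->]].
Qed.

Lemma walk_len_rcons n (E : {set {set 'I_n}}) u v x l :
  walk_len E u v l -> adj E v x -> walk_len E u x l.+1.
Proof.
case=> p [sz pth lst] vx; exists (rcons p x).
by rewrite size_rcons sz rcons_path pth lst vx last_rcons.
Qed.

Lemma walk_len_rev n (E : {set {set 'I_n}}) u v l : walk_len E u v l -> walk_len E v u l.
Proof.
case=> p [sz pth <-]; exists (rev (belast u p)); split.
- by rewrite size_rev size_belast.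
- rewrite rev_path; apply: sub_path pth => x y; rewrite /adj.
  by rewrite (_ : [set y; x] = [set x; y]) // setUC.
- by case: (lastP p) => //= q y; rewrite belast_rcons rev_cons last_rcons.
Qed.

Lemma eq_set2 (T : finType) (u v x y : T) :
  [set u; v] = [set x; y] -> (u = x /\ v = y) \/ (u = y /\ v = x).
Proof.
move=> e.
have hu : u \in [set x; y] by rewrite -e set21.
have hv : v \in [set x; y] by rewrite -e set22.
have hx : x \in [set u; v] by rewrite e set21.
have hy : y \in [set u; v] by rewrite e set22.
case/set2P: hu hx hy => -> hx hy; case/set2P: hv hx hy => -> hx hy; auto.
- by case/set2P: hy => ->; auto.
- by case/set2P: hx => ->; auto.
Qed.

(* The path [0 - 1 - ... - N-1] plus the hub [ord_max = N] joined to all of it. *)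
Definition fan_edge N (u v : 'I_N.+1) : bool :=
  ((u.+1 == v :> nat) || (v.+1 == u :> nat)) && (maxn u v < N)
  || ((u == N :> nat) != (v == N :> nat)).

Definition fan N : {set {set 'I_N.+1}} :=
  [set e | [exists u, exists v, (e == [set u; v]) && fan_edge u v]].

Definition spokes N : {set {set 'I_N.+1}} := [set e in fan N | ord_max \in e].

Lemma fan_edgeC N (u v : 'I_N.+1) : fan_edge u v = fan_edge v u.
Proof. by rewrite /fan_edge; apply/idP/idP; lia. Qed.

Lemma mem_fan N (u v : 'I_N.+1) : ([set u; v] \in fan N) = fan_edge u v.
Proof.
apply/idP/idP => [|uv].
  rewrite inE => /existsP [x /existsP [y /andP [/eqP /eq_set2 [] [-> ->] //]]].
  by rewrite fan_edgeC.
by rewrite inE; apply/existsP; exists u; apply/existsP; exists v; rewrite eqxx.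
Qed.

Lemma fan_edge_neq N (u v : 'I_N.+1) : fan_edge u v -> u != v.
Proof. by apply: contraTneq => ->; rewrite /fan_edge; lia. Qed.

Lemma fan_spoke N (u : 'I_N.+1) : u < N -> [set u; ord_max] \in fan N.
Proof. by rewrite mem_fan /fan_edge /=; lia. Qed.

Lemma fan_path_edge N (u v : 'I_N.+1) : u.+1 = v -> v < N -> [set u; v] \in fan N.
Proof. by rewrite mem_fan /fan_edge; lia. Qed.

Lemma hub_notin_path N (u v : 'I_N.+1) : u < N -> v < N -> ord_max \notin [set u; v].
Proof. by rewrite in_set2 -!val_eqE /=; lia. Qed.

Lemma spokes_hub N (e : {set 'I_N.+1}) : e \in spokes N -> ord_max \in e.
Proof. by rewrite inE => /andP []. Qed.

Lemma spokes_sub N : spokes N \subset fan N.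
Proof. by apply/subsetP => e; rewrite inE => /andP []. Qed.

Lemma fan_simple N : simple_graph (fan N).
Proof.
move=> e; rewrite inE => /existsP [u /existsP [v /andP [/eqP -> /fan_edge_neq uv]]].
by rewrite cards2 uv.
Qed.

Lemma fan_connected N : connected_graph (fan N).
Proof.
have hub u : u != ord_max -> adj (fan N) u ord_max /\ adj (fan N) ord_max u.
  move=> uN; have lt_uN : u < N by move: uN; rewrite -val_eqE /=; have := ltn_ord u; lia.
  by rewrite /adj fan_spoke // setUC fan_spoke.
move=> u v; have [-> | /hub [u_hub _]] := eqVneq u ord_max.
  have [-> | /hub [_ hub_v]] := eqVneq v ord_max; first by exists 0, [::].
  by exists 1, [:: v]; rewrite /= hub_v.
have [-> | /hub [_ hub_v]] := eqVneq v ord_max; first by exists 1, [:: ord_max]; rewrite /= u_hub.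
by exists 2, [:: ord_max; v]; rewrite /= u_hub hub_v.
Qed.

Lemma fan_outerplanar N : outerplanar (fan N).
Proof.
exists 1%g => a b c d; rewrite !perm1 !mem_fan /fan_edge => ab cd [ac cb bd].
by move: ab cd ac cb bd (ltn_ord a) (ltn_ord b) (ltn_ord c) (ltn_ord d); lia.
Qed.

Lemma fan_path_walk N (Es : {set {set 'I_N.+1}}) a j : Es \subset spokes N -> a + j < N ->
  walk_len (fan N :\: Es) (inord a) (inord (a + j)) j.
Proof.
move=> Es_hub; elim: j => [|j IH] ajN; first by exists [::]; rewrite addn0.
apply: walk_len_rcons (IH _) _; first lia.
rewrite /adj in_setD fan_path_edge ?inordK ?addnS ?andbT; try lia.
have hub_free : ord_max \notin [set (inord (a + j) : 'I_N.+1); inord (a + j).+1].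
  by apply: hub_notin_path; rewrite inordK; lia.
by apply: contra hub_free => /(subsetP Es_hub) /spokes_hub.
Qed.

Lemma revealed_spoke N h (p : 'I_N.+1) : p \in h -> p < N ->
  [set p; ord_max] \in revealed (spokes N) h.
Proof.
move=> ph pN; rewrite inE; apply/andP; split; first by rewrite inE fan_spoke // set22.
by apply/hasP; exists p; rewrite ?set21.
Qed.

Section AllSpokesBlocked.

Local Unset Implicit Arguments.
Variables (A : strategy) (N : nat) (s : 'I_N.+1) (k : nat).
Hypotheses (A_valid : valid_strategy A) (N_ge2 : 1 < N) (s_path : s < N).
Local Set Implicit Arguments.

Local Notation run Es := (history A (fan N) Es s ord_max k).
Local Notation pos Es := (position A (fan N) Es s ord_max k).

(* Only the spoke at the current vertex is known to be blocked, so the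
   traveller must step along the path. *)
Lemma blocked_run_step i : pos (spokes N) i < N ->
  pos (spokes N) i.+1 < N /\ ((pos (spokes N) i.+1 == (pos (spokes N) i).+1 :> nat)
                            || (pos (spokes N) i == (pos (spokes N) i.+1).+1 :> nat)).
Proof.
set h := run (spokes N) i; set p := pos (spokes N) i => p_path.
have free (q : 'I_N.+1) : q < N -> [set p; q] \notin revealed (spokes N) h.
  move=> q_path; apply: contra (hub_notin_path p_path q_path).
  by move=> /(subsetP (revealed_sub _ _)) /spokes_hub.
have [|edge unrevealed] := A_valid N.+1 (fan N) s ord_max k h (revealed (spokes N) h).
  rewrite (_ : last s h = p) //; have [next_path|last_path] := ltnP p.+1 N.
    by exists (inord p.+1); rewrite fan_path_edge ?free ?inordK //; lia.
  exists (inord p.-1); split; first by rewrite setUC fan_path_edge ?inordK //; lia.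
  by apply: free; rewrite inordK; lia.
rewrite -position_succ (_ : last s h = p) // in edge unrevealed.
set q := pos (spokes N) i.+1 in edge unrevealed *.
have q_hub : q != ord_max.
  by apply: contraNneq unrevealed => ->; apply: revealed_spoke => //; apply: position_in_history.
by move: edge q_hub (ltn_ord q); rewrite mem_fan /fan_edge -val_eqE /=; lia.
Qed.

Lemma blocked_run_path i : pos (spokes N) i < N.
Proof. by elim: i => [//|i IH]; case: (blocked_run_step IH). Qed.

Lemma blocked_run_unit_steps : unit_steps (fun i => (pos (spokes N) i)%:Z - s%:Z)%R.
Proof. by move=> i; case: (blocked_run_step (blocked_run_path i)) => _; lia. Qed.

(* Until the traveller visits [x], the instance with the spoke at [x] open
   reveals exactly what the one with all spokes blocked does. *)
Lemma open_spoke_arrival x m : pos (spokes N :\ [set x; ord_max]) m = ord_max ->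
  exists2 j, j < m & pos (spokes N) j = x.
Proof.
case: m => [|i arrive].
  by rewrite /position /= => s_hub; move: s_path; rewrite s_hub /=; lia.
have [/mem_history [j ji <-]|x_unvisited] := boolP (x \in run (spokes N) i); first by exists j.
suff same : run (spokes N :\ [set x; ord_max]) i.+1 = run (spokes N) i.+1.
  have : pos (spokes N :\ [set x; ord_max]) i.+1 = pos (spokes N) i.+1 by rewrite /position same.
  by rewrite arrive => hub; have := blocked_run_path i.+1; rewrite -hub /=; lia.
apply: history_agree => j ji; apply: revealed_setD1 => v vj.
have [j' j'j <-] := mem_history vj; rewrite in_set2 negb_or.
apply/andP; split; last by rewrite -val_eqE /= ltn_eqF ?blocked_run_path.
apply: contraNneq x_unvisited => <-.
by apply: (history_subset (j := j')); [lia | exact: position_in_history].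
Qed.

End AllSpokesBlocked.

Theorem theorem2 (R : realType) (eps : R) (A : strategy) :
  (0 < eps)%R -> valid_strategy A ->
  exists (n : nat) (E : {set {set 'I_n}}) (s t : 'I_n) (Es : {set {set 'I_n}}) (k : nat),
    [/\ simple_graph E, connected_graph E, outerplanar E,
        road_map E Es s t /\ (#|Es| <= k)%N
      & ratio_gt A E Es s t k (9 - eps)%R].
Proof.
move=> eps0 A_valid; have [L misses] := unit_walk_misses (ltac:(lra) : (9 - eps < 9)%R).
set N := (2 * L).+2; set s : 'I_N.+1 := inord L; set k := #|spokes N|.
have [LN N_ge2] : 2 * L < N /\ 1 < N by rewrite /N; lia.
have s_path : s < N by rewrite inordK; lia.
have [|b [m [mL late]]] := misses _ (blocked_run_unit_steps k A_valid N_ge2 s_path).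
  by rewrite /position /= subrr.
set x : 'I_N.+1 := inord (if b then L + m else L - m).
have x_ray : (x%:Z - s%:Z)%R = ray b m by rewrite !inordK; case: (b) => /=; lia.
set Es := spokes N :\ [set x; ord_max].
have Es_hub : Es \subset spokes N by apply: subD1set.
have open_spoke : [set x; ord_max] \in fan N :\: Es.
  by rewrite in_setD in_setD1 eqxx fan_spoke // inordK; case: (b); lia.
have s_x : walk_len (fan N :\: Es) s x m.
  rewrite /s /x; case: (b); first by apply: fan_path_walk; lia.
  have := @fan_path_walk N Es (L - m) m Es_hub (ltac:(lia)).
  by rewrite subnK // => [/walk_len_rev //|]; case/andP: mL.
have s_t := walk_len_rcons s_x open_spoke.
exists N.+1, (fan N), s, ord_max, Es, k; split.
- exact: fan_simple.
- exact: fan_connected.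
- exact: fan_outerplanar.
- split; last exact: subset_leq_card.
  split; last by exists m.+1.
  rewrite properEneq (subset_trans Es_hub (spokes_sub N)) andbT.
  by apply: contraTneq open_spoke => ->; rewrite setDv inE.
- move=> d [_ shortest] m' arrive.
  have [j jm pos_x] := open_spoke_arrival A_valid N_ge2 s_path arrive.
  have /(_ (shortest _ s_t)) := late d j; rewrite pos_x => /(_ x_ray) ratio.
  by apply: lt_le_trans ratio _; rewrite ler_nat.
Qed.
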